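(* Let $k\ge 2$ and let $\mathbf{x}$ be a random vector in $\mathbb{R}^k$ (asset returns) with mean $\boldsymbol{\mu}=E(\mathbf{x})$ and covariance matrix $\boldsymbol{\Sigma}=\mathrm{Var}(\mathbf{x})$, symmetric and positive definite. Let $n\ge 2$, let $\alpha_1,\dots,\alpha_n>0$ be pairwise distinct risk aversions, $\beta_1,\dots,\beta_n>0$ with $\sum_{i=1}^n\beta_i=1$ relative wealth proportions, and $\phi_1,\dots,\phi_n>0$ mimicking coefficients. For a $k\times n$ matrix $\mathbf{W}=(\mathbf{w}_1,\dots,\mathbf{w}_n)$ of portfolio weight vectors (with $\mathbf{w}_i'\mathbf{1}=1$, where $\mathbf{1}\in\mathbb{R}^k$ is the vector of ones) put $\mathbf{w}_{\mathbf{f}}=\mathbf{W}\boldsymbol{\beta}=\sum_{i=1}^n\beta_i\mathbf{w}_i$, $\boldsymbol\beta=(\beta_1,\dots,\beta_n)'$, and $$EU_i^*=\mathbf{w}_i'\boldsymbol{\mu}-\frac{\alpha_i}{2}\mathbf{w}_i'\boldsymbol{\Sigma}\mathbf{w}_i-\frac{\phi_i}{2}(\mathbf{w}_i-\mathbf{w}_{\mathbf{f}})'\boldsymbol{\Sigma}(\mathbf{w}_i-\mathbf{w}_{\mathbf{f}}),\qquad EU^*=\sum_{i=1}^n\beta_i EU_i^*.$$ Then $$EU^*=E(\boldsymbol{\beta}'\mathbf{W}'\mathbf{x})-\frac12 E\big[(\mathbf{x}-E(\mathbf{x}))'\mathbf{W}\mathbf{A}\mathbf{W}'(\mathbf{x}-E(\mathbf{x}))\big]=\boldsymbol{\beta}'\mathbf{W}'\boldsymbol{\mu}-\frac12\operatorname{tr}(\mathbf{A}\mathbf{W}'\boldsymbol{\Sigma}\mathbf{W}),$$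 where the $n\times n$ matrix $\mathbf{A}$ is $$\mathbf{A}=(\mathbf{A}_0+\boldsymbol{\Phi})\mathbf{B}+(\bar\phi\mathbf{I}_n-2\boldsymbol{\Phi})\boldsymbol{\beta}\boldsymbol{\beta}',\qquad \bar\phi=\boldsymbol\beta'\boldsymbol\phi=\sum_{i=1}^n\beta_i\phi_i,$$ with $\mathbf{A}_0=\mathrm{diag}(\alpha_1,\dots,\alpha_n)$, $\boldsymbol{\Phi}=\mathrm{diag}(\phi_1,\dots,\phi_n)$, $\mathbf{B}=\mathrm{diag}(\beta_1,\dots,\beta_n)$, $\boldsymbol\phi=(\phi_1,\dots,\phi_n)'$, and $\mathbf{I}_n$ the $n\times n$ identity.
   Context: $EU_i^*$ is the mean-variance objective of investor $i$ penalized by the $\boldsymbol\Sigma$-weighted squared distance of his portfolio from the aggregate (wealth-weighted) portfolio $\mathbf{w}_{\mathbf f}$; $EU^*$ is the aggregate objective of a mutual fund pooling the investors. Short sales are allowed (weights may be negative). *)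

From HB Require Import structures.
From mathcomp Require Import all_boot all_order all_algebra.
From mathcomp Require Import all_classical all_reals all_analysis.
Set Implicit Arguments. Unset Strict Implicit. Unset Printing Implicit Defensive.
Import Order.TTheory GRing.Theory Num.Theory.
Local Open Scope ring_scope.

Section defs.
Context {d : measure_display} {T : measurableType d} {R : realType}.

Definition rvec {k : nat} (x : 'I_k -> T -> R) (w : T) : 'cV[R]_k :=
  \col_j x j w.

Definition meanvec (P : probability T R) {k : nat} (x : 'I_k -> T -> R)
  : 'cV[R]_k := \col_j fine ('E_P[x j])%E.

Definition covmx (P : probability T R) {k : nat} (x : 'I_k -> T -> R)
  : 'M[R]_k := \matrix_(i, j) fine (covariance P (x i) (x j)).
End defs.

Definition posdef {R : realType} {k : nat} (S : 'M[R]_k) : Prop :=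
  S^T = S /\ forall v : 'cV[R]_k, v != 0 -> 0 < (v^T *m S *m v) 0 0.

Definition cvec {R : realType} {n : nat} (a : 'I_n -> R) : 'cV[R]_n :=
  \col_i a i.

Definition diagm {R : realType} {n : nat} (a : 'I_n -> R) : 'M[R]_n :=
  diag_mx (cvec a)^T.

Definition wf {R : realType} {k n : nat} (W : 'M[R]_(k, n)) (beta : 'I_n -> R)
  : 'cV[R]_k := W *m cvec beta.

Definition EUi {R : realType} {k n : nat} (mu : 'cV[R]_k) (S : 'M[R]_k)
  (alpha beta phi : 'I_n -> R) (W : 'M[R]_(k, n)) (i : 'I_n) : R :=
  let wi := col i W in
  let dv := wi - wf W beta in
  (wi^T *m mu) 0 0 - alpha i / 2 * (wi^T *m S *m wi) 0 0
  - phi i / 2 * (dv^T *m S *m dv) 0 0.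

Definition EU {R : realType} {k n : nat} (mu : 'cV[R]_k) (S : 'M[R]_k)
  (alpha beta phi : 'I_n -> R) (W : 'M[R]_(k, n)) : R :=
  \sum_(i < n) beta i * EUi mu S alpha beta phi W i.

Definition Amat {R : realType} {n : nat} (alpha beta phi : 'I_n -> R)
  : 'M[R]_n :=
  let phibar := \sum_(i < n) beta i * phi i in
  (diagm alpha + diagm phi) *m diagm beta
  + (phibar%:M - 2%:R *: diagm phi) *m (cvec beta *m (cvec beta)^T).

From HB Require Import structures.
From mathcomp Require Import all_boot all_order all_algebra.
From mathcomp Require Import all_classical all_reals all_analysis.
From mathcomp Require Import ring.
Set Implicit Arguments. Unset Strict Implicit. Unset Printing Implicit Defensive.
Import Order.TTheory GRing.Theory Num.Theory.
Local Open Scope ring_scope.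

(* Write G = W' Sigma W for the Gram matrix of the portfolios.  Then
   w_i' Sigma w_i = G_ii, w_f' Sigma w_i = (beta' G)_i and w_f' Sigma w_f = beta' G beta,
   so every EU_i^* is linear in W' mu and G, and summing with weights beta_i
   collects the quadratic terms into -1/2 tr(A G): the diagonal part (A0 + Phi) B
   comes from the terms G_ii, the cross terms -2 Phi beta beta' from (beta' G)_i,
   and the penalty phi_i beta' G beta, averaged over i, gives phibar beta beta'.
   The expectation form is the identity E[(x - mu)' N (x - mu)] = tr(Sigma N). *)

Lemma mulmx_colE (R : pzSemiRingType) m p q (X : 'M[R]_(m, p)) (Y : 'M[R]_(p, q)) a j :
  (X *m col j Y) a 0 = (X *m Y) a j.
Proof. by rewrite colE mulmxA -colE mxE. Qed.

Lemma tr_col_mulmx (R : pzSemiRingType) m p q (X : 'M[R]_(m, p)) (Y : 'M[R]_(m, q)) i j :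
  ((col i X)^T *m Y) 0 j = (X^T *m Y) i j.
Proof. by rewrite tr_col -row_mul mxE. Qed.

Lemma bilin_mxC (R : comPzSemiRingType) k (S : 'M[R]_k) (u v : 'cV[R]_k) :
  S^T = S -> u^T *m S *m v = v^T *m S *m u.
Proof.
move=> St; apply/matrixP => i j; rewrite !ord1.
transitivity ((u^T *m S *m v)^T 0 0); first by rewrite [RHS]mxE.
by rewrite !trmx_mul trmxK St mulmxA.
Qed.

Lemma quad_mxB (R : comPzRingType) k (S : 'M[R]_k) (u v : 'cV[R]_k) : S^T = S ->
  ((u - v)^T *m S *m (u - v)) 0 0
  = (u^T *m S *m u) 0 0 - 2 * (v^T *m S *m u) 0 0 + (v^T *m S *m v) 0 0.
Proof.
move=> St; rewrite [(u - v)^T]linearB /= !mulmxBl !mulmxBr (bilin_mxC u v St).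
rewrite !mxE; ring.
Qed.

Lemma bilin_col (R : pzSemiRingType) k m p (S : 'M[R]_k) (X : 'M[R]_(k, m))
    (Y : 'M[R]_(k, p)) i j :
  ((col i X)^T *m S *m col j Y) 0 0 = (X^T *m S *m Y) i j.
Proof. by rewrite mulmx_colE -mulmxA tr_col_mulmx mulmxA. Qed.

Section mean_variance.
Variables (R : realType) (k n : nat) (mu : 'cV[R]_k) (S : 'M[R]_k).
Variables (alpha beta phi : 'I_n -> R) (W : 'M[R]_(k, n)).
Hypothesis S_sym : S^T = S.

Let b := cvec beta.
Let G := W^T *m S *m W.
Let phibar := \sum_(i < n) beta i * phi i.

Lemma EUi_gram i : EUi mu S alpha beta phi W i =
  (W^T *m mu) i 0 - alpha i / 2 * G i i
  - phi i / 2 * (G i i - 2 * (b^T *m G) 0 i + (b^T *m G *m b) 0 0).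
Proof.
rewrite /EUi quad_mxB // tr_col_mulmx !bilin_col /wf -/b.
have -> : ((W *m b)^T *m S *m col i W) 0 0 = (b^T *m G) 0 i.
  by rewrite mulmx_colE trmx_mul /G !mulmxA.
by rewrite trmx_mul /G !mulmxA.
Qed.

Lemma Amat_mul_diag (M : 'M[R]_n) i :
  (Amat alpha beta phi *m M) i i
  = beta i * ((alpha i + phi i) * M i i + (phibar - 2 * phi i) * (b^T *m M) 0 i).
Proof.
rewrite /Amat -/phibar -/b mulmxDl -!mulmxA !mulmxDl mulNmx -scalemxAl.
rewrite mul_scalar_mx /diagm !mul_diag_mx !mxE.
under eq_bigr do rewrite !mxE.
by rewrite big_ord1; ring.
Qed.

Lemma EU_mxtrace : EU mu S alpha beta phi W =
  (b^T *m W^T *m mu) 0 0 - 2^-1 * \tr (Amat alpha beta phi *m W^T *m S *m W).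
Proof.
set c := fun i => (b^T *m G) 0 i.
have bGb : (b^T *m G *m b) 0 0 = \sum_i beta i * c i.
  by rewrite mxE; apply: eq_bigr => i _; rewrite mulrC /b mxE.
have bWmu : (b^T *m W^T *m mu) 0 0 = \sum_i beta i * (W^T *m mu) i 0.
  by rewrite -mulmxA mxE; apply: eq_bigr => i _; rewrite /b !mxE.
have -> : Amat alpha beta phi *m W^T *m S *m W = Amat alpha beta phi *m G.
  by rewrite /G !mulmxA.
transitivity (\sum_i beta i * ((W^T *m mu) i 0
    - 2^-1 * ((alpha i + phi i) * G i i - 2 * phi i * c i))
  - 2^-1 * (phibar * (b^T *m G *m b) 0 0)).
  rewrite /EU /phibar mulr_suml mulr_sumr -sumrB.
  by apply: eq_bigr => i _; rewrite EUi_gram /c; ring.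
rewrite bGb bWmu /mxtrace (eq_bigr _ (fun i _ => Amat_mul_diag G i)).
rewrite !mulr_sumr -!sumrB.
by apply: eq_bigr => i _; rewrite /c; ring.
Qed.

End mean_variance.

Section random_vector.
Context {d : measure_display} {T : measurableType d} {R : realType}.
Variable P : probability T R.

Lemma Lfun1_sum (I : Type) (r : seq I) (F : I -> T -> R) :
  (forall i, F i \in Lfun P 1) -> (fun w => \sum_(i <- r) F i w) \in Lfun P 1.
Proof. by move=> F1; rewrite -fct_sumE rpred_sum. Qed.

Lemma expectation_fsum (I : Type) (r : seq I) (F : I -> T -> R) :
  (forall i, F i \in Lfun P 1) ->
  ('E_P[fun w => (\sum_(i <- r) F i w)%R] = \sum_(i <- r) 'E_P[F i])%E.
Proof.
move=> F1; elim: r => [|i r IHr].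
  by under eq_fun do rewrite big_nil; rewrite big_nil expectation_cst.
under eq_fun do rewrite big_cons.
by rewrite big_cons -IHr -expectationD ?Lfun1_sum.
Qed.

Variables (k : nat) (x : 'I_k -> T -> R).

Lemma expectation_linear_form (v : 'rV[R]_k) :
  (forall j, x j \in Lfun P 1) ->
  ('E_P[fun w => ((v *m rvec x w) 0 0)%R] = ((v *m meanvec P x) 0 0)%:E)%E.
Proof.
move=> x1.
have -> : (fun w => (v *m rvec x w) 0 0) = (fun w => \sum_j (v 0 j \o* x j) w).
  by apply/funext => w; rewrite mxE; apply: eq_bigr => j _; rewrite mxE mulrC.
rewrite expectation_fsum => [|j]; last exact: Lfun_scale.
rewrite mxE -sumEFin; apply: eq_bigr => j _.
by rewrite expectationZl // mxE EFinM fineK ?expectation_fin_num.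
Qed.

Lemma expectation_quad_form (N : 'M[R]_k) :
  (forall j, x j \in Lfun P 2%:E) ->
  ('E_P[fun w => (((rvec x w - meanvec P x)^T *m N *m (rvec x w - meanvec P x)) 0 0)%R]
   = (\tr (covmx P x *m N))%:E)%E.
Proof.
move=> x2.
pose y j := x j \- cst (meanvec P x j 0).
have y2 j : y j \in Lfun P 2%:E.
  have p1 : (1 <= 2%:E :> \bar R)%E by rewrite lee1n.
  exact: (rpredB (x2 j) (Lfun_cst _ _ _)).
have yy1 l j : y l \* y j \in Lfun P 1 by apply: Lfun2_mul_Lfun1.
have covE l j : covmx P x l j = fine 'E_P[y l \* y j].
  by rewrite mxE unlock /y /meanvec !mxE.
transitivity ('E_P[fun w => (\sum_l (fun w => \sum_j (N j l \o* (y l \* y j)) w) w)%R])%E.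
  congr expectation; apply/funext => w; rewrite mxE; apply: eq_bigr => l _.
  rewrite mxE big_distrl; apply: eq_bigr => j _.
  by rewrite !mxE /y /= /meanvec !mxE; ring.
rewrite expectation_fsum => [|l]; last by apply: Lfun1_sum => j; apply: Lfun_scale.
rewrite /mxtrace -sumEFin; apply: eq_bigr => l _.
rewrite expectation_fsum => [|j]; last exact: Lfun_scale.
rewrite mxE -sumEFin; apply: eq_bigr => j _.
by rewrite expectationZl // covE EFinM fineK ?expectation_fin_num // muleC.
Qed.

End random_vector.

Theorem proposition1 (d : measure_display) (T : measurableType d)
  (R : realType) (P : probability T R) (k n : nat)
  (x : 'I_k -> T -> R)
  (alpha beta phi : 'I_n -> R) (W : 'M[R]_(k, n)) :
  (2 <= k)%N -> (2 <= n)%N ->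
  (forall j, x j \in Lfun P 2%:E) ->
  posdef (covmx P x) ->
  (forall i, 0 < alpha i) -> injective alpha ->
  (forall i, 0 < beta i) -> \sum_(i < n) beta i = 1 ->
  (forall i, 0 < phi i) ->
  (forall i, \sum_(j < k) W j i = 1) ->
  let mu := meanvec P x in
  let S := covmx P x in
  let A := Amat alpha beta phi in
  let b := cvec beta in
  ((EU mu S alpha beta phi W)%:E =
     ('E_P[fun w => (b^T *m W^T *m rvec x w) ord0 ord0]
      - (2^-1)%:E * 'E_P[fun w =>
          ((rvec x w - mu)^T *m W *m A *m W^T *m (rvec x w - mu)) ord0 ord0])%E)
  /\
  EU mu S alpha beta phi W =
     (b^T *m W^T *m mu) 0 0 - 2^-1 * \tr (A *m W^T *m S *m W).
Proof.
move=> _ _ x2 [S_sym _] _ _ _ _ _ _ mu S A b.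
have x1 j : x j \in Lfun P 1 := Lfun_subset12 (fin_num_measure P _ measurableT) (x2 j).
split; last exact: EU_mxtrace.
rewrite EU_mxtrace // expectation_linear_form //.
have -> : ('E_P[fun w => ((rvec x w - mu)^T *m W *m A *m W^T *m (rvec x w - mu)) ord0 ord0]
    = (\tr (S *m (W *m A *m W^T)))%:E)%E.
  by rewrite -expectation_quad_form //; congr expectation; apply/funext => w; rewrite !mulmxA.
by rewrite mxtrace_mulC !mulmxA mxtrace_mulC !mulmxA EFinB EFinM.
Qed.
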